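(* Let $G$ be connected with weights $w:E\to\mathbb{R}_{>0}$ such that for every pair of vertices $a,b$ there is exactly one shortest $a$–$b$ path in $(G,w)$. Let $\pi$ be a vertex order, let $m_C$ be the output of the basic customization applied to $m_0$, and let $m_P$ be the perfect metric. Let $R$ be the set of edges $\{x,y\}$ of $G_\pi^*$ with $m_P(\{x,y\})\neq m_C(\{x,y\})$. Then (i) for all $s,t\in V$ there is an up-down $s$–$t$ path in $G_\pi^*$ that uses no edge of $R$ and whose $m_C$-length equals $\mathrm{dist}_I(s,t)$; and (ii) for every edge $\{x,y\}\notin R$ of $G_\pi^*$, the one-edge path $x,y$ is the only up-down $x$–$y$ path in $G_\pi^*$ whose $m_C$-length equals $\mathrm{dist}_I(x,y)$.
   Context: Let $G=(V,E)$ be a finite simple undirected graph with $n=|V|$ vertices. A vertex order is a bijection $\pi:\{1,\dots,n\}\to V$; the rank of $v$ is $\pi^{-1}(v)$. Contracting a vertex $v$ in a graph means deleting $v$ and its incident edges and adding an edge between every pair of former neighbors of $v$ that are not already adjacent. The core graph $G_{\pi,i}$ is obtained from $G$ by contracting $\pi(1),\dots,\pi(i-1)$ in this order. $G_\pi^*$ is the graph on $V$ whose edge set is the union of the edge sets of all $G_{\pi,i}$, $i=1,\dots,n$ (i.e. $G$ together with all edges inserted during the contractions). Let $w:E\to\mathbb{R}_{>0}$ and let $\mathrm{dist}_I(s,t)$ be the shortest $s$–$t$ path length in $(G,w)$. A metric is a map $m$ assigning to every edge of $G_\pi^*$ a value in $\mathbb{R}_{>0}\cup\{\infty\}$; the $m$-length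 of a path in $G_\pi^*$ is the sum of $m$ over its edges. An up-down path is a path $v_0,\dots,v_k$ in $G_\pi^*$ for which there is $j$ with the ranks strictly increasing along $v_0,\dots,v_j$ and strictly decreasing along $v_j,\dots,v_k$. The perfect metric is $m_P(\{x,y\})=\mathrm{dist}_I(x,y)$ for every edge $\{x,y\}$ of $G_\pi^*$. The initial metric $m_0$ is $m_0(\{x,y\})=w(\{x,y\})$ if $\{x,y\}\in E$ and $\infty$ otherwise. The basic customization starts from $m:=m_0$ and processes the edges $\{x,y\}$ of $G_\pi^*$ in nondecreasing order of the rank of the lower-ranked endpoint (ties arbitrary); when processing $\{x,y\}$ it sets, for every vertex $z$ of rank smaller than both $x$ and $y$ that is adjacent to both in $G_\pi^*$, $m(\{x,y\}):=\min\{m(\{x,y\}),m(\{x,z\})+m(\{z,y\})\}$ using the current values. Its output is the final metric $m_C$. *)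

From HB Require Import structures.
From mathcomp Require Import all_boot all_order all_algebra.
Set Implicit Arguments. Unset Strict Implicit. Unset Printing Implicit Defensive.
Import Order.TTheory GRing.Theory Num.Theory.
Local Open Scope ring_scope.

Section Defs.
Variable T : finType.

Definition simple_graph (e : rel T) : Prop :=
  (forall x y, e x y = e y x) /\ (forall x, ~~ e x x).

Definition connected (e : rel T) : Prop := forall a b, connect e a b.

(* A vertex order pi : {1..n} -> V, here 0-based: 'I_#|T| -> T, bijective. *)
Definition pi_seq (pi : 'I_#|T| -> T) : seq T := [seq pi i | i <- enum 'I_#|T|].
Definition rank (pi : 'I_#|T| -> T) (v : T) : nat := index v (pi_seq pi).

Definition contract (g : rel T) (v : T) : rel T :=
  fun a b => [&& a != v, b != v & g a b || [&& a != b, g a v & g v b]].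

(* Core graph G_{pi,k+1}: contract pi(1),...,pi(k) (1-based) in order. *)
Definition core_graph (e : rel T) (pi : 'I_#|T| -> T) (k : nat) : rel T :=
  foldl contract e (take k (pi_seq pi)).

Definition Gstar (e : rel T) (pi : 'I_#|T| -> T) : rel T :=
  fun x y => [exists k : 'I_#|T|, core_graph e pi k x y].

Variable R : realFieldType.

Definition wlen (w : T -> T -> R) (s : T) (p : seq T) : R :=
  \sum_(d <- pairmap w s p) d.

Definition is_dist (e : rel T) (w : T -> T -> R) (s t : T) (d : R) : Prop :=
  (exists p, [/\ path e s p, last s p = t & wlen w s p = d]) /\
  (forall p, path e s p -> last s p = t -> d <= wlen w s p).

(* Extended values R_{>0} U {oo}: None stands for infinity. *)
Definition oadd (a b : option R) : option R :=
  match a, b with Some x, Some y => Some (x + y) | _, _ => None end.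
Definition omin (a b : option R) : option R :=
  match a, b with
  | None, _ => b
  | _, None => a
  | Some x, Some y => Some (Num.min x y)
  end.

(* m-length of the path s :: p in G_pi^* (metric given on ordered pairs,
   used symmetrically). *)
Definition mlen (m : T -> T -> option R) (s : T) (p : seq T) : option R :=
  foldr oadd (Some 0) (pairmap m s p).

Definition m0 (e : rel T) (w : T -> T -> R) : T -> T -> option R :=
  fun x y => if e x y then Some (w x y) else None.

Definition mP (dist : T -> T -> R) : T -> T -> option R :=
  fun x y => Some (dist x y).

Definition process_edge (e : rel T) (pi : 'I_#|T| -> T)
    (m : T -> T -> option R) (xy : T * T) : T -> T -> option R :=
  let: (x, y) := xy in
  let v := foldr omin (m x y)
      [seq oadd (m x z) (m z y) |
        z <- enum T & [&& (rank pi z < rank pi x)%N, (rank pi z < rank pi y)%N,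
                         Gstar e pi x z & Gstar e pi z y]] in
  fun a b => if ((a == x) && (b == y)) || ((a == y) && (b == x)) then v else m a b.

Definition low_rank (pi : 'I_#|T| -> T) (xy : T * T) : nat :=
  minn (rank pi xy.1) (rank pi xy.2).

(* A valid processing order: lists every edge of G_pi^* exactly once (as an
   ordered pair in one of its two orientations), nondecreasing in the rank of
   the lower-ranked endpoint; ties arbitrary. *)
Definition valid_edge_order (e : rel T) (pi : 'I_#|T| -> T) (ord : seq (T * T))
  : Prop :=
  [/\ all (fun xy => Gstar e pi xy.1 xy.2) ord,
      (forall x y, Gstar e pi x y ->
         count (fun uv => (uv == (x, y)) || (uv == (y, x))) ord = 1%N) &
      sorted (fun p q => low_rank pi p <= low_rank pi q)%N ord].

Definition customize (e : rel T) (w : T -> T -> R) (pi : 'I_#|T| -> T)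
    (ord : seq (T * T)) : T -> T -> option R :=
  foldl (process_edge e pi) (m0 e w) ord.

Definition up_down (e : rel T) (pi : 'I_#|T| -> T) (s : T) (p : seq T) : Prop :=
  [/\ path (Gstar e pi) s p, uniq (s :: p) &
      exists j, sorted (fun a b => rank pi a < rank pi b)%N (take j.+1 (s :: p))
             /\ sorted (fun a b => rank pi a > rank pi b)%N (drop j (s :: p))].

End Defs.

(* Call a walk of G from a to b low when all its inner vertices have rank
   below both a and b.  The development proceeds as follows.
   - Contraction: a simple low walk between a and b forces {a, b} into
     G_pi^*, since its inner vertices get contracted one after another
     (core_graph_walk, Gstar_low_walk).
   - Customization invariant: the metric stays symmetric and each finite
     value m(a, b) is the length of a low a-b walk (realized_mC); so
     m_C >= dist_I.
   - Processing edges by increasing lower rank yields the lower triangle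
     inequality m_C(x, y) <= m_C(x, z) + m_C(z, y) for z below x and y
     (mC_triangle); induction on the highest inner vertex then bounds
     m_C(x, y) by every simple low x-y walk (mC_le_low_walk).  Hence the
     endpoints of a low shortest walk form an exact edge, m_C = dist_I.
   - Part (i): split the shortest s-t walk at its highest vertex; the rank
     records on both sides give an ascending and a descending path of exact
     edges (ascent, descent) forming an up-down path (exact_up_down_path).
   - Part (ii): an up-down x-y path of m_C-length dist_I(x, y) unfolds into
     a shortest x-y walk through its vertices, which by uniqueness is the
     low walk realizing m_C(x, y); its second vertex would lie below x and y,
     which the up-down shape forbids (exact_edge_unique). *)

From HB Require Import structures.
From mathcomp Require Import all_boot all_order all_algebra zify lra.
Set Implicit Arguments. Unset Strict Implicit. Unset Printing Implicit Defensive.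
Import Order.TTheory GRing.Theory Num.Theory.
Local Open Scope ring_scope.

Section Walks.
Variables (T : finType) (R : realFieldType) (e : rel T) (w : T -> T -> R).

Lemma wlen_nil x : wlen w x [::] = 0.
Proof. by rewrite /wlen big_nil. Qed.

Lemma wlen_cons x y p : wlen w x (y :: p) = w x y + wlen w y p.
Proof. by rewrite /wlen /= big_cons. Qed.

Lemma wlen_cat x p1 p2 :
  wlen w x (p1 ++ p2) = wlen w x p1 + wlen w (last x p1) p2.
Proof. by rewrite /wlen pairmap_cat big_cat. Qed.

Hypothesis wpos : forall x y, e x y -> 0 < w x y.

Lemma wlen_ge0 x p : path e x p -> 0 <= wlen w x p.
Proof.
elim: p x => [|y p IH] x /=; first by rewrite wlen_nil.
by case/andP=> exy pp; rewrite wlen_cons addr_ge0 ?IH ?ltW ?wpos.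
Qed.

Lemma nonuniq_shorter x p : path e x p -> ~~ uniq (x :: p) ->
  exists q, [/\ path e x q, last x q = last x p & wlen w x q < wlen w x p].
Proof.
elim: p x => [|y p IH] x // pp.
case xin: (x \in y :: p); last first.
  move: pp; rewrite /= xin /= => /andP[exy pp] nu.
  have [q [pq lq wq]] := IH y pp nu.
  by exists (y :: q); split; rewrite /= ?exy ?wlen_cons ?ltrD2l.
move=> _; case/splitPr: xin pp => p1 p2; rewrite cat_path /= => /and3P[pp1 ep2 pp2].
exists p2; split => //; first by rewrite last_cat.
by rewrite wlen_cat /= wlen_cons addrA ltrDr ltr_wpDl ?wlen_ge0 ?wpos.
Qed.

Lemma split_at (a u : T) q : u \in a :: q ->
  exists q1 q2, q = q1 ++ q2 /\ last a q1 = u.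
Proof.
rewrite inE => /predU1P[->|]; first by exists [::], q.
by case/splitPr=> p1 p2; exists (rcons p1 u), p2; rewrite cat_rcons last_rcons.
Qed.

Lemma uniq_split (a : T) q1 q2 : uniq (a :: q1 ++ q2) ->
  [/\ uniq (a :: q1), uniq (last a q1 :: q2) & forall v, v \in a :: q1 -> v \notin q2].
Proof.
rewrite -cat_cons cat_uniq => /and3P[u1 dis u2].
have disj v : v \in a :: q1 -> v \notin q2.
  by move=> vin; apply: contra dis => vq; apply/hasP; exists v.
by split; rewrite //= u2 andbT disj ?mem_last.
Qed.

Lemma path_zip (r : rel T) s p x y : path r s p -> (x, y) \in zip (s :: p) p -> r x y.
Proof.
elim: p s => [|v p IH] s //= /andP[rsv pp]; rewrite inE => /predU1P[[-> ->] //|].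
exact: IH.
Qed.

Lemma drop_size_cons (x : T) p r : drop (size p) (x :: p ++ r) = last x p :: r.
Proof. by elim: p x => [|y p IH] x //=; rewrite IH. Qed.

End Walks.

Section Ranks.
Variables (T : finType) (pi : 'I_#|T| -> T).
Hypothesis pib : bijective pi.

Lemma size_pi_seq : size (pi_seq pi) = #|T|.
Proof. by rewrite /pi_seq size_map size_enum_ord. Qed.

Lemma uniq_pi_seq : uniq (pi_seq pi).
Proof. by rewrite /pi_seq map_inj_uniq ?enum_uniq //; apply: bij_inj. Qed.

Lemma mem_pi_seq z : z \in pi_seq pi.
Proof.
by case: pib => g _ gK; rewrite -(gK z) /pi_seq; apply: map_f; rewrite mem_enum.
Qed.

Lemma rank_lt z : (rank pi z < #|T|)%N.
Proof. by rewrite /rank -size_pi_seq index_mem mem_pi_seq. Qed.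

Lemma rank_nth x0 k : (k < #|T|)%N -> rank pi (nth x0 (pi_seq pi) k) = k.
Proof. by move=> kT; rewrite /rank index_uniq ?size_pi_seq ?uniq_pi_seq. Qed.

Lemma rank_inj : injective (rank pi).
Proof.
move=> a b h; have := nth_index a (mem_pi_seq a); have := nth_index a (mem_pi_seq b).
by rewrite -/(rank pi a) -/(rank pi b) h => -> ->.
Qed.

Lemma rank_lt_trans : transitive (fun a b => rank pi a < rank pi b)%N.
Proof. by move=> b a c; apply: ltn_trans. Qed.

Lemma rank_gt_trans : transitive (fun a b => rank pi b < rank pi a)%N.
Proof. by move=> b a c ba cb; apply: ltn_trans cb ba. Qed.

Lemma rank_lt_of_le v z : (rank pi v <= rank pi z)%N -> v != z ->
  (rank pi v < rank pi z)%N.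
Proof.
by move=> le vz; rewrite ltn_neqAle le andbT; apply: contraNneq vz => /rank_inj ->.
Qed.

End Ranks.

Section Contraction.
Variables (T : finType) (e : rel T) (pi : 'I_#|T| -> T).
Hypothesis pib : bijective pi.
Hypothesis e_sym : forall x y, e x y = e y x.
Hypothesis e_irr : forall x, ~~ e x x.

Lemma contract_sym (g : rel T) v : (forall x y, g x y = g y x) ->
  forall x y, contract g v x y = contract g v y x.
Proof.
move=> gs x y; rewrite /contract gs [g x v]gs [g v y]gs [x == y]eq_sym.
by case: (x != v); case: (y != v); rewrite //= (andbC (g v x)).
Qed.

Lemma contract_irr (g : rel T) v : (forall x, ~~ g x x) ->
  forall x, ~~ contract g v x x.
Proof. by move=> gi x; rewrite /contract eqxx (negbTE (gi x)) /= !andbF. Qed.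

Lemma core_graph_sym k x y : core_graph e pi k x y = core_graph e pi k y x.
Proof.
rewrite /core_graph; elim: (take k _) e e_sym => [|v l IH] g gs //=.
by apply: IH; apply: contract_sym.
Qed.

Lemma core_graph_irr k x : ~~ core_graph e pi k x x.
Proof.
rewrite /core_graph; elim: (take k _) e e_irr => [|v l IH] g gi //=.
by apply: IH; apply: contract_irr.
Qed.

Lemma Gstar_sym x y : Gstar e pi x y = Gstar e pi y x.
Proof. by apply/existsP/existsP => -[k hk]; exists k; rewrite core_graph_sym. Qed.

Lemma Gstar_neq x y : Gstar e pi x y -> x != y.
Proof. by case/existsP => k; apply: contraTneq => ->; rewrite core_graph_irr. Qed.

Lemma up_down_edge x y : Gstar e pi x y -> up_down e pi x [:: y].
Proof.
move=> gxy; have xy := Gstar_neq gxy.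
split; rewrite /= ?gxy ?inE ?xy //.
have [lt|ge] := ltnP (rank pi x) (rank pi y); first by exists 1%N; rewrite /= lt.
by exists 0%N; rewrite /= andbT (rank_lt_of_le pib ge) // eq_sym.
Qed.

Lemma core_graph_S x0 k : (k < #|T|)%N ->
  core_graph e pi k.+1 = contract (core_graph e pi k) (nth x0 (pi_seq pi) k).
Proof.
by move=> kT; rewrite /core_graph (take_nth x0) ?size_pi_seq // foldl_rcons.
Qed.

Definition low_walk (a b : T) (q : seq T) : Prop :=
  [/\ path e a q, last a q = b &
      forall z, z \in q -> z != b -> (rank pi z < minn (rank pi a) (rank pi b))%N].

(* Two vertices of rank >= k joined by a simple walk whose inner vertices
   have rank < k are adjacent in the core graph G_k: contracting the inner
   vertices one by one, in rank order, shortcuts the walk. *)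
Lemma core_graph_walk k a b q : (k <= #|T|)%N ->
  (k <= rank pi a)%N -> (k <= rank pi b)%N -> a != b ->
  path e a q -> last a q = b -> uniq (a :: q) ->
  (forall z, z \in q -> z != b -> (rank pi z < k)%N) -> core_graph e pi k a b.
Proof.
elim: k a b q => [|k IH] a b q kT ka kb ab pq lq uq hq.
  case: q pq lq uq hq => [|c q] /=; first by move=> _ /eqP; rewrite (negbTE ab).
  case/andP=> eac _ _ _ hq; rewrite /core_graph take0 /=.
  by case: (c =P b) eac => [<- //|/eqP cb]; have := hq c (mem_head _ _) cb.
set v := nth a (pi_seq pi) k; have rv : rank pi v = k := rank_nth pib a kT.
have below_v z : z != v -> (rank pi z < k.+1)%N -> (rank pi z < k)%N.
  by rewrite -rv ltnS => zv /rank_lt_of_le; apply.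
have av : a != v by apply: contraTneq ka => ->; rewrite rv ltnn.
have bv : b != v by apply: contraTneq kb => ->; rewrite rv ltnn.
rewrite (core_graph_S a) // -/v /contract av bv /=.
case vq: (v \in q); last first.
  apply/orP; left; apply: (IH a b q) => //; try exact: ltnW.
  by move=> z zq zb; apply: below_v (hq z zq zb); apply: contraFneq vq => <-.
apply/orP; right; rewrite ab /=.
case/splitPr: vq pq lq uq hq => p1 p2.
rewrite cat_path last_cat -cat_cons cat_uniq.
move=> /andP[pp1 /andP[e1 pp2]] lq /and3P[u1 dis u2] hq; rewrite /= in lq.
have notin_p1 u : u \in v :: p2 -> u \notin a :: p1.
  by move=> uin; apply: contra dis => up1; apply/hasP; exists u.
have bp1 : b \notin a :: p1 by apply: notin_p1; rewrite -lq mem_last.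
have vp1 : v \notin a :: p1 by apply: notin_p1; rewrite mem_head.
apply/andP; split.
  apply: (IH a v (rcons p1 v));
    rewrite ?rv ?(ltnW kT) ?(ltnW ka) ?rcons_path ?pp1 ?last_rcons //.
    by rewrite -rcons_cons rcons_uniq vp1.
  move=> z; rewrite mem_rcons inE => /predU1P[-> | zp1]; first by rewrite eqxx.
  move=> zv; apply: (below_v _ zv); apply: hq; last first.
    by apply: contraNneq bp1 => <-; rewrite inE zp1 orbT.
  by rewrite mem_cat zp1.
apply: (IH v b p2); rewrite ?rv ?(ltnW kT) ?(ltnW kb) 1?eq_sym //.
move=> z zp2 zb; have zv : z != v by apply: contraTneq zp2 => ->; case/andP: u2.
by apply: (below_v _ zv); apply: hq; rewrite // mem_cat inE zp2 !orbT.
Qed.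

Lemma Gstar_low_walk a b q : a != b -> uniq (a :: q) -> low_walk a b q ->
  Gstar e pi a b.
Proof.
move=> ab uq [pq lq hq]; apply/existsP.
have kT : (minn (rank pi a) (rank pi b) < #|T|)%N by rewrite gtn_min rank_lt.
exists (Ordinal kT); apply: (core_graph_walk (ltnW kT) _ _ ab pq lq uq hq).
  exact: geq_minl.
exact: geq_minr.
Qed.

End Contraction.

Section Customization.
Variables (T : finType) (R : realFieldType) (e : rel T) (w : T -> T -> R).
Variables (pi : 'I_#|T| -> T) (ord : seq (T * T)).
Hypothesis pib : bijective pi.
Hypothesis e_sym : forall x y, e x y = e y x.
Hypothesis e_irr : forall x, ~~ e x x.
Hypothesis w_sym : forall x y, w x y = w y x.
Hypothesis wpos : forall x y, e x y -> 0 < w x y.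
Hypothesis vord : valid_edge_order e pi ord.

Definition ole (a b : option R) : bool :=
  match a, b with
  | _, None => true
  | None, Some _ => false
  | Some x, Some y => x <= y
  end.

Lemma ole_refl (a : option R) : ole a a.
Proof. by case: a => /=. Qed.

Lemma ole_trans (a b c : option R) : ole a b -> ole b c -> ole a c.
Proof. by case: a; case: b; case: c => //= x y z; apply: le_trans. Qed.

Lemma ole_oadd (a a' b b' : option R) : ole a a' -> ole b b' -> ole (oadd a b) (oadd a' b').
Proof. by case: a; case: a'; case: b; case: b' => //= ? ? ? ?; apply: lerD. Qed.

Lemma oaddC (a b : option R) : oadd a b = oadd b a.
Proof. by case: a; case: b => //= x y; rewrite addrC. Qed.

Lemma foldr_omin_le (b : option R) L a : a \in b :: L -> ole (foldr (@omin R) b L) a.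
Proof.
have omin_le (c d : option R) : ole (omin c d) c && ole (omin c d) d.
  by case: c d => [x|] [y|] //=; rewrite ?lexx // !ge_min !lexx orbT.
elim: L => [|c L IH] /=; first by rewrite mem_seq1 => /eqP ->; apply: ole_refl.
case/andP: (omin_le c (foldr (@omin R) b L)) => lec leL.
rewrite !inE => /or3P[ab|/eqP -> //|aL]; apply: ole_trans leL (IH _) => //.
  by rewrite inE ab.
by rewrite inE aL orbT.
Qed.

Lemma foldr_omin_some (b : option R) L d : foldr (@omin R) b L = Some d -> Some d \in b :: L.
Proof.
have omin_cases (c f : option R) : omin c f = c \/ omin c f = f.
  by case: c f => [x|] [y|]; rewrite /= /Num.min; try case: ifP; auto.
elim: L => [|c L IH] /=; first by move=> ->; rewrite mem_head.
case: (omin_cases c (foldr (@omin R) b L)) => -> Ed.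
  by rewrite -Ed !inE eqxx orbT.
by have := IH Ed; rewrite !inE => /orP[->|->]; rewrite ?orbT.
Qed.

Lemma mlen_cons (m : T -> T -> option R) x y p :
  mlen m x (y :: p) = oadd (m x y) (mlen m y p).
Proof. by []. Qed.

Lemma mlen_cat (m : T -> T -> option R) x p1 p2 :
  mlen m x (p1 ++ p2) = oadd (mlen m x p1) (mlen m (last x p1) p2).
Proof.
elim: p1 x => [|y p1 IH] x /=; first by case: (mlen m x p2) => //= d; rewrite add0r.
rewrite !mlen_cons IH; case: (m x y) => //= a; case: (mlen m y p1) => //= b.
by case: (mlen _ _ _) => //= c; rewrite addrA.
Qed.

Notation proc := (@process_edge T R e pi).

Definition orients (a b : T) : pred (T * T) :=
  fun uv => (uv == (a, b)) || (uv == (b, a)).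

Definition sym_metric (m : T -> T -> option R) : Prop := forall a b, m a b = m b a.

Lemma proc_sym m o : sym_metric m -> sym_metric (proc m o).
Proof.
move=> ms a b; case: o => x y /=.
by rewrite [(b == x) && _]andbC [(b == y) && _]andbC orbC; case: ifP.
Qed.

Lemma proc_le m o a b : sym_metric m -> ole (proc m o a b) (m a b).
Proof.
move=> ms; case: o => x y /=; case: ifP => [|_]; last exact: ole_refl.
by case/orP=> /andP[/eqP -> /eqP ->]; rewrite ?[m y x]ms; apply: foldr_omin_le;
  rewrite mem_head.
Qed.

Lemma proc_other m o a b : ~~ orients a b o -> proc m o a b = m a b.
Proof.
case: o => x y; rewrite /orients !xpair_eqE /= => h.
by case: ifP => // /orP[] /andP[/eqP ax /eqP bx]; move: h; rewrite ax bx !eqxx ?orbT.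
Qed.

Lemma proc_triangle m o x y z : sym_metric m -> orients x y o ->
  (rank pi z < rank pi x)%N -> (rank pi z < rank pi y)%N ->
  Gstar e pi x z -> Gstar e pi z y -> ole (proc m o x y) (oadd (m x z) (m z y)).
Proof.
move=> ms /orP[] /eqP -> zx zy gxz gzy /=; rewrite !eqxx ?orbT;
  apply: foldr_omin_le; rewrite inE; apply/orP; right; apply/mapP; exists z.
- by rewrite mem_filter zx zy gxz gzy mem_enum.
- by [].
- by rewrite mem_filter zx zy mem_enum Gstar_sym // gzy Gstar_sym // gxz.
- by rewrite oaddC [m y z]ms [m z x]ms.
Qed.

Lemma fold_le l m a b : sym_metric m -> ole (foldl proc m l a b) (m a b).
Proof.
elim: l m => [|o l IH] m ms /=; first exact: ole_refl.
exact: ole_trans (IH _ (proc_sym o ms)) (proc_le o a b ms).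
Qed.

Lemma fold_other l m a b : ~~ has (orients a b) l -> foldl proc m l a b = m a b.
Proof.
by elim: l m => [|o l IH] m //=; rewrite negb_or => /andP[ho hl]; rewrite IH ?proc_other.
Qed.

Definition realized (m : T -> T -> option R) : Prop :=
  sym_metric m /\
  forall a b d, m a b = Some d -> exists2 q, low_walk e pi a b q & wlen w a q = d.

Lemma realized_m0 : realized (m0 e w).
Proof.
split=> [a b|a b d]; rewrite /m0; first by rewrite e_sym w_sym.
case: ifP => // eab [<-]; exists [:: b]; last by rewrite wlen_cons wlen_nil addr0.
by split=> //= [|z]; rewrite ?eab // inE => ->.
Qed.

Lemma low_walk_cat a z b q1 q2 :
  (rank pi z < rank pi a)%N -> (rank pi z < rank pi b)%N ->
  low_walk e pi a z q1 -> low_walk e pi z b q2 -> low_walk e pi a b (q1 ++ q2).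
Proof.
move=> za zb [p1 l1 h1] [p2 l2 h2]; split; rewrite ?cat_path ?last_cat ?l1 ?p1 //.
move=> u; rewrite mem_cat leq_min => /orP[uq|uq] ub.
  have [->|uz] := eqVneq u z; first by rewrite za.
  by have := h1 u uq uz; rewrite leq_min => /andP[-> uz']; rewrite (ltn_trans uz' zb).
by have := h2 u uq ub; rewrite leq_min => /andP[uz -> ]; rewrite (ltn_trans uz za).
Qed.

(* The invariant is preserved by processing an edge: a new value is a sum
   of two realized values through a lower vertex z. *)
Lemma proc_realized m o : realized m -> realized (proc m o).
Proof.
move=> [ms mw]; split=> [|a b d]; first exact: proc_sym.
case: o => x y /=; case: ifP => [hab|_]; last exact: mw.
move/foldr_omin_some; rewrite inE => /orP[/eqP hw|].
  by case/orP: hab => /andP[/eqP -> /eqP ->]; apply: mw; rewrite // ms.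
case/mapP=> z; rewrite mem_filter => /andP[/and4P[zx zy _ _] _].
have join a' b' d1 d2 : (rank pi z < rank pi a')%N -> (rank pi z < rank pi b')%N ->
    m a' z = Some d1 -> m z b' = Some d2 ->
    exists2 q, low_walk e pi a' b' q & wlen w a' q = d1 + d2.
  move=> za zb /mw[q1 w1 <-] /mw[q2 w2 <-].
  exists (q1 ++ q2); first exact: low_walk_cat za zb w1 w2.
  by case: w1 => _ l1 _; rewrite wlen_cat l1.
case Exz: (m x z) => [d1|] //; case Ezy: (m z y) => [d2|] //= [->].
case/orP: hab => /andP[/eqP -> /eqP ->]; first exact: join.
by rewrite addrC; apply: join; rewrite // ms.
Qed.

Lemma realized_fold l m : realized m -> realized (foldl proc m l).
Proof. by elim: l m => [|o l IH] m mr //=; apply/IH/proc_realized. Qed.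

Notation mC := (customize e w pi ord).

Lemma realized_mC : realized mC.
Proof. exact: realized_fold realized_m0. Qed.

Lemma processed_before l1 o l2 u v : l1 ++ o :: l2 = ord ->
  (minn (rank pi u) (rank pi v) < low_rank pi o)%N -> ~~ has (orients u v) l2.
Proof.
move=> Eord lt; case: vord => _ _; rewrite -Eord sorted_cat_cons => /andP[_].
move/(order_path_min (fun b a c => @leq_trans _ _ _))/allP => ge.
apply/hasPn => r /ge; rewrite leqNgt; apply: contra => /orP[] /eqP -> //.
by rewrite /low_rank /= minnC.
Qed.

(* The basic customization yields the lower triangle inequality: when {x,y}
   is processed, the edges {x,z} and {z,y} to a lower vertex z already hold
   their final values. *)
Lemma mC_triangle x y z : Gstar e pi x y -> Gstar e pi x z -> Gstar e pi z y ->
  (rank pi z < rank pi x)%N -> (rank pi z < rank pi y)%N ->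
  ole (mC x y) (oadd (mC x z) (mC z y)).
Proof.
move=> gxy gxz gzy zx zy; have [_ cnt _] := vord.
have /hasP[o oin oxy] : has (orients x y) ord by rewrite has_count cnt.
have [l1 [l2 Eord]] : exists l1 l2, l1 ++ o :: l2 = ord.
  by case/splitPr: oin => l1 l2; exists l1, l2.
set M := foldl proc (m0 e w) l1; have [Ms _] : realized M := realized_fold l1 realized_m0.
have mCE : mC = foldl proc (proc M o) l2 by rewrite /customize -Eord foldl_cat.
have lo : low_rank pi o = minn (rank pi x) (rank pi y).
  by case/orP: oxy => /eqP ->; rewrite /low_rank //= minnC.
have zx' : z != x by apply: contraTneq zx => ->; rewrite ltnn.
have zy' : z != y by apply: contraTneq zy => ->; rewrite ltnn.
have keep u v : (minn (rank pi u) (rank pi v) < low_rank pi o)%N ->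
    ~~ orients u v o -> mC u v = M u v.
  move=> lt uv; rewrite mCE fold_other ?proc_other //.
  exact: processed_before Eord lt.
have off v : ~~ orients z v o && ~~ orients v z o.
  by case/orP: oxy => /eqP ->; rewrite /orients !xpair_eqE ![_ == z]eq_sym
    (negbTE zx') (negbTE zy') ?andbF.
rewrite [mC x z]keep ?lo ?(minn_idPr (ltnW zx)) ?leq_min ?zx ?zy ?(andP (off x)).2 //.
rewrite [mC z y]keep ?lo ?(minn_idPl (ltnW zy)) ?leq_min ?zx ?zy ?(andP (off y)).1 //.
apply: ole_trans (proc_triangle Ms oxy zx zy gxz gzy).
by rewrite mCE; apply/fold_le/proc_sym.
Qed.

(* The customized metric is at most the length of any simple low walk:
   split the walk at its highest inner vertex z and use the triangle
   inequality at z. *)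
Lemma mC_le_low_walk n x y q : (size q <= n)%N -> x != y -> uniq (x :: q) ->
  low_walk e pi x y q -> ole (mC x y) (Some (wlen w x q)).
Proof.
elim: n x y q => [|n IH] x y q sq xy uq lw; case: (lw) => pq lq hq.
  by move: sq lq xy; rewrite leqn0 => /nilP -> /= ->; rewrite eqxx.
pose A := [pred v | (v \in q) && (v != y)].
case: (pickP A) => [v0 Av0|noA]; last first.
  have [c [q' Eq]] : exists c q', q = c :: q'.
    by case: q lq {A noA lw uq hq sq pq} => [/= lq|c q' _]; [rewrite lq eqxx in xy | exists c, q'].
  have cy : c = y by apply/eqP; move: (noA c); rewrite /= Eq mem_head /= => /negbFE.
  move: pq; rewrite Eq /= cy => /andP[exy pq'].
  apply: ole_trans (fold_le ord x y realized_m0.1) _.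
  by rewrite /m0 exy /= wlen_cons lerDl (wlen_ge0 wpos).
case: (arg_maxnP (rank pi) Av0) => z /andP[zq zy] zmax.
have [q1 [q2 [Eq lz]]] : exists q1 q2, q = q1 ++ q2 /\ last x q1 = z.
  by apply: split_at; rewrite inE zq orbT.
have := hq z zq zy; rewrite leq_min => /andP[zx zy'].
move: pq lq uq sq hq; rewrite Eq cat_path last_cat lz => /andP[pq1 pq2] lq uq sq hq.
have [uq1 uq2 disj] := uniq_split uq; rewrite lz in uq2.
have inner v : v \in q1 ++ q2 -> v != y -> v != z -> (rank pi v < rank pi z)%N.
  by move=> vq vy vz; apply: (rank_lt_of_le pib _ vz); apply: (zmax v); rewrite /= Eq vq vy.
have q1n : q1 != [::] by apply/eqP => q1e; move: lz zx; rewrite q1e /= => ->; rewrite ltnn.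
have q2n : q2 != [::] by apply/eqP => q2e; move: lq zy; rewrite q2e /= => ->; rewrite eqxx.
have [sq1 sq2] : (size q1 <= n)%N /\ (size q2 <= n)%N.
  by move: sq q1n q2n; rewrite size_cat -!size_eq0; lia.
have yq2 : y \in q2 by rewrite -lq; case: (q2) q2n => //= ? ? _; apply: mem_last.
have yq1 : y \notin x :: q1 := contraL (disj y) yq2.
have lw1 : low_walk e pi x z q1.
  split=> // v vq1 vz; rewrite (minn_idPr (ltnW zx)) inner ?mem_cat ?vq1 //.
  by apply: contraNneq yq1 => <-; rewrite inE vq1 orbT.
have lw2 : low_walk e pi z y q2.
  split=> // v vq2 vy; rewrite (minn_idPl (ltnW zy')) inner ?mem_cat ?vq2 ?orbT //.
  by apply: contraTneq vq2 => ->; case/andP: uq2.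
have xz : x != z by apply: contraTneq zx => ->; rewrite ltnn.
have gxy : Gstar e pi x y by apply: (Gstar_low_walk pib xy) lw; rewrite Eq.
have gxz := Gstar_low_walk pib xz uq1 lw1.
have gzy := Gstar_low_walk pib zy uq2 lw2.
rewrite wlen_cat lz; apply: ole_trans (mC_triangle gxy gxz gzy zx zy') _.
by apply: (@ole_oadd _ (Some _) _ (Some _)); apply: IH.
Qed.

Variable dist : T -> T -> R.
Hypothesis hdist : forall s t, is_dist e w s t (dist s t).

Definition shortest (s : T) (q : seq T) : Prop :=
  path e s q /\ wlen w s q = dist s (last s q).

Lemma dist_triangle a u b : dist a b <= dist a u + dist u b.
Proof.
have [[q1 [p1 l1 <-]] _] := hdist a u; have [[q2 [p2 l2 <-]] _] := hdist u b.
by rewrite -l1 -wlen_cat (hdist a b).2 ?cat_path ?p1 ?l1 ?p2 // last_cat l1.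
Qed.

Lemma shortest_cat a q1 q2 :
  shortest a (q1 ++ q2) -> shortest a q1 /\ shortest (last a q1) q2.
Proof.
rewrite /shortest cat_path last_cat => -[/andP[p1 p2]]; rewrite wlen_cat.
have := (hdist a (last a q1)).2 q1 p1 erefl.
have := (hdist (last a q1) (last (last a q1) q2)).2 q2 p2 erefl.
have := dist_triangle a (last a q1) (last (last a q1) q2).
by rewrite /=; do 3!move=> ?; split; split => //; lra.
Qed.

Lemma split_shortest a q u : shortest a q -> uniq (a :: q) -> u \in a :: q ->
  exists q1 q2, [/\ q = q1 ++ q2, last a q1 = u,
    [/\ shortest a q1, shortest u q2 & dist a (last a q) = dist a u + dist u (last u q2)],
    uniq (a :: q1) /\ uniq (u :: q2) & forall v, v \in a :: q1 -> v \notin q2].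
Proof.
move=> sh uq /split_at[q1 [q2 [Eq lu]]]; exists q1, q2.
have /uniq_split[uq1 uq2 disj] : uniq (a :: q1 ++ q2) by rewrite -Eq.
have /shortest_cat[sh1 sh2] : shortest a (q1 ++ q2) by rewrite -Eq.
rewrite lu in uq2 sh2; split=> //; split=> //.
by rewrite -sh.2 Eq wlen_cat sh1.2 lu sh2.2.
Qed.

Lemma mC_ge_dist a b d : mC a b = Some d -> dist a b <= d.
Proof. by case/realized_mC.2 => q [pq lq _] <-; apply: (hdist a b).2. Qed.

Definition exact : rel T := fun x y => Gstar e pi x y && (mC x y == Some (dist x y)).

Lemma exact_low_walk a b q : a != b -> uniq (a :: q) -> low_walk e pi a b q ->
  shortest a q -> exact a b.
Proof.
move=> ab uq lw [_ wq]; rewrite /exact (Gstar_low_walk pib ab uq lw) /=.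
have := mC_le_low_walk (leqnn _) ab uq lw; case: lw => _ lq _.
case Eab: (mC a b) => [d|] //= le; rewrite wq lq in le.
by apply/eqP; congr Some; apply/le_anti; rewrite le (mC_ge_dist Eab).
Qed.

Definition exact_up : rel T := fun x y => exact x y && (rank pi x < rank pi y)%N.
Definition exact_down : rel T := fun x y => exact x y && (rank pi y < rank pi x)%N.

(* A shortest simple walk ending at its highest vertex h is shortcut by an
   ascending path of exact edges: split at the highest vertex u other than
   h; the walk from u to h is low, and recursion handles the walk up to u. *)
Lemma ascent n a q : (size q <= n)%N -> shortest a q -> uniq (a :: q) ->
  (forall v, v \in a :: q -> v != last a q -> (rank pi v < rank pi (last a q))%N) ->
  exists p, [/\ path exact_up a p, last a p = last a q, {subset p <= q} &
                mlen mC a p = Some (dist a (last a q))].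
Proof.
elim: n a q => [|n IH] a q sq sh uq top.
  by exists [::]; move: sq sh; rewrite leqn0 => /nilP -> [_] /=; rewrite wlen_nil => <-.
have [q0|qn] := eqVneq q [::].
  by exists [::]; move: sh; rewrite q0 => -[_] /=; rewrite wlen_nil => <-.
set h := last a q in sh top *.
have hq : h \in q by rewrite /h; case: (q) qn => //= ? ? _; apply: mem_last.
have ah : a != h by apply: contraTneq hq => <-; case/andP: uq.
pose A := [pred v | (v \in a :: q) && (v != h)].
have Aa : A a by rewrite /= mem_head ah.
case: (arg_maxnP (rank pi) Aa) => u /andP[uaq uh] umax.
have below v : A v -> v != u -> (rank pi v < rank pi u)%N.
  by move=> Av vu; apply: (rank_lt_of_le pib _ vu); apply: (umax v).
have [q1 [q2 [Eq lu [sh1 sh2 dq] [uq1 uq2] disj]]] := split_shortest sh uq uaq.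
have lq2 : last u q2 = h by rewrite /h Eq last_cat lu.
have hq2 : h \in q2.
  by rewrite -lq2; case: (q2) lq2 => [/= uh'|? ? _ /=]; [rewrite uh' eqxx in uh | apply: mem_last].
have uhr : (rank pi u < rank pi h)%N by apply: top.
have lw2 : low_walk e pi u h q2.
  split=> //; first by case: sh2.
  move=> v vq2 vh; rewrite (minn_idPl (ltnW uhr)) below //=; last first.
    by apply: contraTneq vq2 => ->; case/andP: uq2.
  by rewrite vh Eq -cat_cons mem_cat vq2 orbT.
have uph : exact_up u h by rewrite /exact_up uhr andbT (exact_low_walk uh uq2 lw2 sh2).
have [p' [pp' lp' sp' mp']] : exists p', [/\ path exact_up a p', last a p' = u,
    {subset p' <= q1} & mlen mC a p' = Some (dist a u)].
  rewrite -lu; apply: IH => //.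
  - have q2n : (0 < size q2)%N by case: (q2) hq2.
    by move: sq; rewrite Eq size_cat; lia.
  move=> v vq1; rewrite lu => vu; apply: below vu; rewrite /= Eq -cat_cons mem_cat vq1 /=.
  by apply: contraTneq hq2 => <-; apply: disj.
exists (rcons p' h); split.
- by rewrite rcons_path pp' lp' uph.
- by rewrite last_rcons.
- by move=> v; rewrite mem_rcons inE Eq mem_cat => /predU1P[->|/sp' ->]; rewrite ?hq2 ?orbT.
rewrite -cats1 mlen_cat mp' lp' mlen_cons; case/andP: uph => /andP[_ /eqP ->] _ /=.
by rewrite addr0 dq lq2.
Qed.

Lemma descent n h q : (size q <= n)%N -> shortest h q -> uniq (h :: q) ->
  (forall v, v \in q -> (rank pi v < rank pi h)%N) ->
  exists p, [/\ path exact_down h p, last h p = last h q, {subset p <= q} &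
                mlen mC h p = Some (dist h (last h q))].
Proof.
elim: n h q => [|n IH] h q sq sh uq top.
  by exists [::]; move: sq sh; rewrite leqn0 => /nilP -> [_] /=; rewrite wlen_nil => <-.
have [q0|qn] := eqVneq q [::].
  by exists [::]; move: sh; rewrite q0 => -[_] /=; rewrite wlen_nil => <-.
set t := last h q in sh *.
have [c0 c0q] : exists c0, c0 \in q by case: (q) qn => // c0 ? _; exists c0; rewrite mem_head.
case: (@arg_maxnP _ c0 (fun v => v \in q) (rank pi) c0q) => u uq' umax.
have below v : v \in q -> v != u -> (rank pi v < rank pi u)%N.
  by move=> vq vu; apply: (rank_lt_of_le pib _ vu); apply: (umax v).
have [q1 [q2 [Eq lu [sh1 sh2 dq] [uq1 uq2] _]]] :=
  split_shortest sh uq (mem_behead (s := h :: q) uq').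
have lq2 : last u q2 = t by rewrite /t Eq last_cat lu.
have hu : h != u by apply: contraTneq uq' => <-; case/andP: uq.
have uhr : (rank pi u < rank pi h)%N by apply: top.
have lw1 : low_walk e pi h u q1.
  split=> //; first by case: sh1.
  by move=> v vq1 vu; rewrite (minn_idPr (ltnW uhr)) below // Eq mem_cat vq1.
have hdu : exact_down h u by rewrite /exact_down uhr andbT (exact_low_walk hu uq1 lw1 sh1).
have [p' [pp' lp' sp' mp']] : exists p', [/\ path exact_down u p', last u p' = t,
    {subset p' <= q2} & mlen mC u p' = Some (dist u t)].
  rewrite -lq2; apply: IH => //.
  - have q1n : (0 < size q1)%N by case: (q1) lu => //= uh'; rewrite uh' eqxx in hu.
    by move: sq; rewrite Eq size_cat; lia.
  move=> v vq2; apply: below; first by rewrite Eq mem_cat vq2 orbT.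
  by apply: contraTneq vq2 => ->; case/andP: uq2.
exists (u :: p'); split.
- by rewrite /= hdu pp'.
- by rewrite /= lp'.
- by move=> v; rewrite inE => /predU1P[->|/sp' vq2] //; rewrite Eq mem_cat vq2 orbT.
rewrite mlen_cons mp'; case/andP: hdu => /andP[_ /eqP ->] _ /=.
by rewrite dq lq2.
Qed.

(* Shortest walks are simple, since positive weights make cycles costly. *)
Lemma shortest_uniq s q : shortest s q -> uniq (s :: q).
Proof.
case=> pq wq; apply/negPn/negP => /(nonuniq_shorter wpos pq)[q' [pq' lq' lt]].
by have := (hdist s (last s q)).2 q' pq' lq'; rewrite -wq leNgt lt.
Qed.

Lemma up_down_cat s p1 p2 :
  path (fun a b => Gstar e pi a b && (rank pi a < rank pi b)%N) s p1 ->
  path (fun a b => Gstar e pi a b && (rank pi b < rank pi a)%N) (last s p1) p2 ->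
  (forall v, v \in s :: p1 -> v \notin p2) -> up_down e pi s (p1 ++ p2).
Proof.
move=> up dn disj.
have inc : sorted (fun a b => rank pi a < rank pi b)%N (s :: p1).
  by apply: sub_path up => a b /andP[].
have dec : sorted (fun a b => rank pi b < rank pi a)%N (last s p1 :: p2).
  by apply: sub_path dn => a b /andP[].
split.
- by rewrite cat_path (sub_path _ up) ?(sub_path _ dn) // => a b /andP[].
- rewrite -cat_cons cat_uniq (sorted_uniq (@rank_lt_trans T pi) (fun a => ltnn _) inc) /=.
  apply/andP; split; first by apply/hasPn => v vp2; apply: contraL vp2; apply: disj.
  by have /andP[] := sorted_uniq (@rank_gt_trans T pi) (fun a => ltnn _) dec.
by exists (size p1); rewrite drop_size_cons /= take_size_cat.
Qed.

(* Part (i): a shortest walk, split at its highest vertex, is shortcut by an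
   up-down path of exact edges of the same length. *)
Lemma exact_up_down_path s t : exists p,
  [/\ up_down e pi s p, last s p = t, path exact s p & mlen mC s p = Some (dist s t)].
Proof.
have [[P [pP lP wP]] _] := hdist s t.
have shP : shortest s P by split; rewrite // lP.
have uP := shortest_uniq shP.
case: (@arg_maxnP _ s (fun v => v \in s :: P) (rank pi) (mem_head s P)) => h hP hmax.
have [q1 [q2 [EP lh [sh1 sh2 dP] [uq1 uq2] disj]]] := split_shortest shP uP hP.
have top1 v : v \in s :: q1 -> v != last s q1 -> (rank pi v < rank pi (last s q1))%N.
  rewrite lh => vq1 vh; apply: (rank_lt_of_le pib _ vh); apply: (hmax v).
  by rewrite EP -cat_cons mem_cat vq1.
have top2 v : v \in q2 -> (rank pi v < rank pi h)%N.
  move=> vq2; apply: (rank_lt_of_le pib).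
    by apply: (hmax v); rewrite EP -cat_cons mem_cat vq2 orbT.
  by apply: contraTneq vq2 => ->; case/andP: uq2.
have [p1 [up1 lp1 sp1 mp1]] := ascent (leqnn _) sh1 uq1 top1.
have [p2 [dn2 lp2 sp2 mp2]] := descent (leqnn _) sh2 uq2 top2.
rewrite lh in lp1 mp1.
exists (p1 ++ p2); split.
- apply: up_down_cat; rewrite ?lp1.
  + by apply: sub_path up1 => a b /andP[/andP[-> _] ->].
  + by apply: sub_path dn2 => a b /andP[/andP[-> _] ->].
  move=> v vp1; have vq1 : v \in s :: q1.
    by move: vp1; rewrite !inE => /predU1P[->|/sp1 ->]; rewrite ?eqxx ?orbT.
  by apply: contra (disj v vq1) => /sp2.
- by rewrite last_cat lp1 lp2 -lP EP last_cat lh.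
- by rewrite cat_path lp1 (sub_path _ up1) ?(sub_path _ dn2) // => a b /andP[].
by rewrite mlen_cat mp1 lp1 mp2 -lP dP.
Qed.

Lemma unfold_mlen x p L : mlen mC x p = Some L ->
  exists q, [/\ path e x q, last x q = last x p, wlen w x q = L & {subset p <= x :: q}].
Proof.
elim: p x L => [|v p IH] x L; first by case=> <-; exists [::]; rewrite wlen_nil.
rewrite mlen_cons; case Ev: (mC x v) => [d1|] //; case Ep: (mlen mC v p) => [d2|] //= [<-].
have [q1 [pq1 lq1 _] <-] := realized_mC.2 x v d1 Ev.
have [q2 [pq2 lq2 <- sq2]] := IH v d2 Ep.
exists (q1 ++ q2); split; rewrite ?cat_path ?last_cat ?wlen_cat ?lq1 ?pq1 ?pq2 //.
have vq : v \in x :: q1 ++ q2 by rewrite -cat_cons mem_cat -lq1 mem_last.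
move=> u; rewrite inE => /predU1P[-> //|/sq2].
by rewrite inE => /predU1P[-> //|uq2]; rewrite inE mem_cat uq2 !orbT.
Qed.

Hypothesis huniq : forall a b, exists! p : seq T,
  [/\ path e a p, last a p = b & wlen w a p = dist a b].

(* Any such path unfolds into the
   shortest x-y walk, which is the low walk realizing m_C(x, y); so its
   second vertex would lie below both x and y, which no up-down path allows. *)
Lemma exact_edge_unique x y p : exact x y -> up_down e pi x p -> last x p = y ->
  mlen mC x p = Some (dist x y) -> p = [:: y].
Proof.
case/andP=> gxy /eqP Exy [_ up [j [inc dec]]] lp mp.
have [Q [pQ lQ wQ sQ]] := unfold_mlen mp.
have [Q2 [pQ2 lQ2 hQ2] wQ2] := realized_mC.2 x y _ Exy.
have EQ : Q2 = Q.
  by have [P [_ uP]] := huniq x y; rewrite -(uP Q) ?(uP Q2) // lQ lp.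
subst Q2.
rewrite lp in lQ; case: p {mp} up inc dec lp sQ => [|v [|c r]] up inc dec lp sQ;
  [by move: (Gstar_neq e_irr gxy); rewrite -lp eqxx | by rewrite -lp |].
have yr : y \in c :: r by move: lp => /= <-; apply: mem_last.
have [xv vy] : x != v /\ v != y.
  move: up => /= /andP[]; rewrite inE negb_or => /andP[xv _] /andP[vcr _].
  by split=> //; apply: contraNneq vcr => ->.
have vQ : v \in Q by have := sQ v (mem_head _ _); rewrite inE eq_sym (negbTE xv).
have := hQ2 v vQ vy; rewrite leq_min => /andP[vx vy'].
case: j inc dec => [|j] inc dec; last by move: inc => /= /andP[]; rewrite ltnNge (ltnW vx).
have /allP/(_ y yr) := order_path_min (@rank_gt_trans T pi) (path_sorted dec).
by rewrite ltnNge (ltnW vy').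
Qed.

End Customization.

Theorem mainTheorem7 (T : finType) (R : realFieldType) (e : rel T)
    (w : T -> T -> R) (dist : T -> T -> R) (pi : 'I_#|T| -> T)
    (ord : seq (T * T)) :
  simple_graph e ->
  connected e ->
  (forall x y, w x y = w y x) ->
  (forall x y, e x y -> 0 < w x y) ->
  (forall s t, is_dist e w s t (dist s t)) ->
  (forall a b, exists! p : seq T,
       [/\ path e a p, last a p = b & wlen w a p = dist a b]) ->
  bijective pi ->
  valid_edge_order e pi ord ->
  let mC := customize e w pi ord in
  let inR x y := Gstar e pi x y && (mP dist x y != mC x y) in
  (forall s t, exists p : seq T,
      [/\ up_down e pi s p, last s p = t,
          (forall x y, (x, y) \in zip (s :: p) p -> ~~ inR x y) &
          mlen mC s p = Some (dist s t)]) /\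
  (forall x y, Gstar e pi x y -> ~~ inR x y ->
      up_down e pi x [:: y] /\ mlen mC x [:: y] = Some (dist x y) /\
      (forall p, up_down e pi x p -> last x p = y ->
         mlen mC x p = Some (dist x y) -> p = [:: y])).
Proof.
move=> [e_sym e_irr] _ w_sym wpos hdist huniq pib vord mC inR.
have exactE x y : Gstar e pi x y -> exact e w pi ord dist x y = ~~ inR x y.
  by move=> gxy; rewrite /exact /inR /mC gxy /= negbK eq_sym.
split=> [s t | x y gxy].
  have [p [ud lp pp mp]] := exact_up_down_path pib e_sym w_sym wpos vord hdist s t.
  exists p; split=> // x y /(path_zip pp) exy.
  by rewrite -exactE //; case/andP: exy.
rewrite -exactE // => exy; have /andP[_ /eqP mxy] := exy.
split; first exact: up_down_edge.
split; first by rewrite mlen_cons /mC mxy /= addr0.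
by move=> p; apply: (exact_edge_unique e_sym e_irr w_sym huniq exy).
Qed.
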